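(* Consider BPSK transmission of a binary linear code over an AWGN channel with noise variance $\sigma^2$ (which determines the SNR), ML decoding with error event $E$, and a family of regions $\{\mathcal{R}(r), r\in\mathcal{I}\}$ satisfying assumptions A1–A3 of the context, with pdf $g$ of $R$ and a non-trivial conditional bound $f_u$ (i.e. $f_u(r)\le1$ for some $r$). Let $f_u(r)$ be a non-decreasing and continuous function of $r$. If $f_u$ does not depend on the SNR, then the optimal parameter $r_1$ minimizing over $r^*$ the bound $\int_{-\infty}^{r^*} f_u(r)g(r)\,{\rm d}r+\int_{r^*}^{+\infty}g(r)\,{\rm d}r$ does not depend on the SNR either.
   Context: System model: codeword bits $c_t$ of a binary linear code of length $n$ are mapped to $s_t=1-2c_t$; $\underline y=\underline s+\underline z$ with $\underline z$ i.i.d. $\mathcal{N}(0,\sigma^2)$; ML (nearest signal) decoding; the all-zero codeword's image $\underline s^{(0)}$ is transmitted; $E$ is the error event. Assumptions: (A1) regions nested ($\mathcal{R}(r_1)\subset\mathcal{R}(r_2)$ for $r_1<r_2$), with pairwise disjoint boundaries whose union over $r\in\mathcal{I}$ is $\mathbb{R}^n$. (A2) $R:\underline y\mapsto r$ for $\underline y\in\partial\mathcal{R}(r)$ has pdf $g(r)$ (set $g\equiv0$ outside $\mathcal{I}$). (A3) ${\rm Pr}\{E\mid\underline y\in\partial\mathcal{R}(r)\}\le f_u(r)$. *)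

From HB Require Import structures.
From mathcomp Require Import all_boot all_order all_algebra.
From mathcomp Require Import all_classical all_reals all_analysis.
Set Implicit Arguments. Unset Strict Implicit. Unset Printing Implicit Defensive.
Import Order.TTheory GRing.Theory Num.Theory.
Import numFieldNormedType.Exports.
Local Open Scope classical_set_scope.
Local Open Scope ring_scope.

Definition is_pdf {R : realType} (g : R -> R) : Prop :=
  measurable_fun setT g /\ (forall x, 0 <= g x) /\
  (\int[@lebesgue_measure R]_(x in setT) (g x)%:E = 1)%E.

Definition ub_bound {R : realType} (g f_u : R -> R) (t : \bar R) : \bar R :=
  (\int[@lebesgue_measure R]_(x in [set x : R | (x%:E <= t)%E]) (f_u x * g x)%:E
   + \int[@lebesgue_measure R]_(x in [set x : R | (t < x%:E)%E]) (g x)%:E)%E.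

From HB Require Import structures.
From mathcomp Require Import all_boot all_order all_algebra.
From mathcomp Require Import all_classical all_reals all_analysis.
From mathcomp Require Import measurable_realfun.
Import Order.TTheory GRing.Theory Num.Theory.
Import numFieldNormedType.Exports.
Local Open Scope classical_set_scope.
Local Open Scope ring_scope.

(* Writing the bound as one integral over the line, the integrand at x is
   [f_u x * g x] or [g x] according to whether x lies below the threshold.
   Taking as threshold the supremum r1 of the sublevel set [f_u <= 1], which
   for a nondecreasing continuous f_u is exactly {x | x <= r1}, chooses the
   smaller of the two values at every x, whatever the density g. *)

Definition ub_integrand {R : realType} (g f_u : R -> R) (t : \bar R) (x : R) : R :=
  if (x%:E <= t)%E then f_u x * g x else g x.

Section Sublevel.
Variables (R : realType) (f : R -> R) (c : R).
Hypothesis f_nondecr : {homo f : x y / x <= y}.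
Hypothesis f_cont : continuous f.

Let sup_sublevel := ereal_sup (EFin @` [set x | f x <= c]).

Lemma lt_sup_sublevel x : (x%:E < sup_sublevel)%E -> f x <= c.
Proof.
move=> /ereal_sup_gt [_ [s fs <-]] xs.
by apply: le_trans fs; apply: f_nondecr; rewrite -lee_fin ltW.
Qed.

Lemma le_sup_sublevel x : (x%:E <= sup_sublevel)%E = (f x <= c).
Proof.
apply/idP/idP => [|fx]; last by apply: ereal_sup_ubound; exists x.
rewrite le_eqVlt => /orP[/eqP xr|]; last exact: lt_sup_sublevel.
rewrite leNgt; apply/negP => cfx.
(* By continuity f > c on a ball around x, yet points just left of x = sup lie in the sublevel set. *)
have [e /= e0 fgt] := (nbhs_ballP _ _).1
  (@cvgr_gt _ _ _ (nbhs_filter x) f _ (f_cont x) _ cfx).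
have xe_ball : ball x e (x - e / 2).
  rewrite /ball /= opprB addrC subrK ger0_norm; last by rewrite divr_ge0 // ltW.
  by rewrite gtr_pMr // invf_lt1 // ltr1n.
have := fgt _ xe_ball; rewrite /= ltNge lt_sup_sublevel //.
by rewrite -xr lte_fin gtrBl divr_gt0.
Qed.

End Sublevel.

Section BoundAsIntegral.
Variables (R : realType) (g f_u : R -> R).
Hypotheses (g_meas : measurable_fun setT g) (g_ge0 : forall x, 0 <= g x).
Hypotheses (f_meas : measurable_fun setT f_u) (f_ge0 : forall x, 0 <= f_u x).

Lemma measurable_below (t : \bar R) : measurable [set x : R | (x%:E <= t)%E].
Proof.
have meas_le : measurable_fun setT (fun x : R => (x%:E <= t)%E).
  exact: measurable_fun_lee.
have := meas_le measurableT [set true] I.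
by rewrite setTI; congr measurable; apply/seteqP; split => x /=.
Qed.

Lemma setC_below (t : \bar R) :
  ~` [set x : R | (x%:E <= t)%E] = [set x | (t < x%:E)%E].
Proof. by apply/seteqP; split => x /=; rewrite ltNge => /negP. Qed.

Lemma measurable_ub_integrand t : measurable_fun setT (fun x => (ub_integrand g f_u t x)%:E).
Proof.
apply/measurable_EFinP; apply: measurable_fun_ifT => //; last exact: measurable_funM.
exact: measurable_fun_lee.
Qed.

Lemma ub_integrand_ge0 t x : 0 <= ub_integrand g f_u t x.
Proof. by rewrite /ub_integrand; case: ifP => _ //; rewrite mulr_ge0. Qed.

Lemma ub_boundE t :
  ub_bound g f_u t = (\int[lebesgue_measure]_(x in setT) (ub_integrand g f_u t x)%:E)%E.
Proof.
rewrite -(setUv [set x : R | (x%:E <= t)%E]) ge0_integral_setU //.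
- rewrite /ub_bound setC_below; congr (_ + _)%E; apply: eq_integral => x;
    rewrite inE /= /ub_integrand; first by move=> ->.
  by rewrite leNgt => ->.
- exact: measurable_below.
- exact: measurableC (measurable_below t).
- by rewrite setUv; exact: measurable_ub_integrand.
- by move=> x _; rewrite lee_fin ub_integrand_ge0.
- exact/disj_setPCl.
Qed.

Lemma ub_integrand_le (r1 t : \bar R) x :
  (x%:E <= r1)%E = (f_u x <= 1) ->
  ub_integrand g f_u r1 x <= ub_integrand g f_u t x.
Proof.
rewrite /ub_integrand => ->.
case: ifPn => fx1; case: ifPn => xt //; first by rewrite ler_piMl.
by rewrite -ltNge in fx1; rewrite ler_peMl // ltW.
Qed.

End BoundAsIntegral.

Theorem corollary1 (R : realType) (f_u : R -> R) (g : R -> R -> R)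
  (f_u_ge0 : forall r, 0 <= f_u r)
  (f_u_nontrivial : exists r, f_u r <= 1)
  (f_u_nondecr : {homo f_u : x y / x <= y})
  (f_u_cont : continuous f_u)
  (g_pdf : forall sigma : R, 0 < sigma -> is_pdf (g sigma)) :
  exists r1 : \bar R, forall sigma : R, 0 < sigma ->
    forall t : \bar R, (ub_bound (g sigma) f_u r1 <= ub_bound (g sigma) f_u t)%E.
Proof.
exists (ereal_sup (EFin @` [set x | f_u x <= 1])) => sigma sigma_gt0 t.
have [g_meas [g_ge0 _]] := g_pdf sigma sigma_gt0.
have f_meas : measurable_fun setT f_u by exact: continuous_measurable_fun.
have integrand_ge0 s x : (0 <= (ub_integrand (g sigma) f_u s x)%:E)%E.
  by rewrite lee_fin ub_integrand_ge0.
rewrite !ub_boundE //; apply: ge0_le_integral => //.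
- exact: (measurable_ub_integrand _ _ _ g_meas f_meas).
- exact: (measurable_ub_integrand _ _ _ g_meas f_meas).
- move=> x _; rewrite lee_fin; apply: ub_integrand_le => //.
  exact: le_sup_sublevel.
Qed.
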